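(* There exist a connected discrete-time interconnection $\Lambda=[\lambda_{ij}]\in\mathbb{R}^{p\times p}$ and a map $Q:\mathbb{N}\to\overline{\mathcal Q}_n$ satisfying $$\liminf_{N\to\infty}\frac1N\,\sigma_{\min}\Big(\sum_{k=0}^NQ_k\Big)>0$$ such that the solutions $x_i(\cdot)$ of $x_i^+=x_i+Q_k\sum_{j\ne i}\lambda_{ij}(x_j-x_i)$ do not synchronize (for some initial condition).
   Context: $\sigma_{\min}$ smallest singular value; $\overline{\mathcal Q}_n$ symmetric positive semidefinite $n\times n$ matrices with induced 2-norm at most $1$. Discrete-time interconnection: $\lambda_{ij}\ge0$, row sums $1$; graph edge $(n_i,n_j)$ iff $\lambda_{ij}>0$; connected if some node is reachable by a directed path from every other node. Sequences $x_i$ synchronize if there is $\bar x$ with $|x_i(k)-\bar x(k)|\to0$ for all $i$. *)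

From HB Require Import structures.
From mathcomp Require Import all_boot all_order all_algebra.
From mathcomp Require Import all_classical all_reals all_analysis.
Set Implicit Arguments. Unset Strict Implicit. Unset Printing Implicit Defensive.
Import Order.TTheory GRing.Theory Num.Theory.
Import numFieldNormedType.Exports.
Local Open Scope ring_scope.
Local Open Scope classical_set_scope.

Section Defs.
Variable R : realType.

Definition vnorm (n : nat) (v : 'cV[R]_n) : R :=
  Num.sqrt (\sum_(i < n) v i 0 ^+ 2).

Definition sigma_min (n : nat) (A : 'M[R]_n) : R :=
  inf [set s : R | exists2 l : R, eigenvalue (A^T *m A) l & s = Num.sqrt l].

Definition in_Qbar (n : nat) (Q : 'M[R]_n) : Prop :=
  Q^T = Q /\
  (forall v : 'cV[R]_n, 0 <= (v^T *m Q *m v) 0 0) /\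
  (forall v : 'cV[R]_n, vnorm (Q *m v) <= vnorm v).

Definition interconnection (p : nat) (L : 'M[R]_p) : Prop :=
  (forall i j, 0 <= L i j) /\ (forall i, \sum_(j < p) L i j = 1).

Definition edge (p : nat) (L : 'M[R]_p) : rel 'I_p := fun i j => 0 < L i j.

Definition connected_graph (p : nat) (L : 'M[R]_p) : Prop :=
  exists r : 'I_p, forall i : 'I_p, connect (edge L) i r.

Fixpoint traj (p n : nat) (L : 'M[R]_p) (Q : nat -> 'M[R]_n)
    (x0 : 'I_p -> 'cV[R]_n) (k : nat) : 'I_p -> 'cV[R]_n :=
  match k with
  | 0 => x0
  | k'.+1 => fun i =>
      traj L Q x0 k' i +
      Q k' *m (\sum_(j < p | j != i) L i j *: (traj L Q x0 k' j - traj L Q x0 k' i))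
  end.

Definition synchronize (p n : nat) (x : nat -> 'I_p -> 'cV[R]_n) : Prop :=
  exists xbar : nat -> 'cV[R]_n,
    forall i : 'I_p, (fun k => vnorm (x k i - xbar k)) @ \oo --> (0 : R^o).

End Defs.

(* Two agents exchanging their states at every step, with Q_k the identity
   (in dimension one): the interconnection [[0,1],[1,0]] is connected and
   sum_(k <= N) Q_k = N+1 gives an excitation liminf equal to 1, yet each
   update merely swaps x_1 and x_2, so x_1 - x_2 alternates between d and -d
   and never tends to 0 when d <> 0. *)
From HB Require Import structures.
From mathcomp Require Import all_boot all_order all_algebra.
From mathcomp Require Import all_classical all_reals all_analysis.
Import Order.TTheory GRing.Theory Num.Theory.
Local Open Scope ring_scope.
Local Open Scope classical_set_scope.

Section SwapExample.
Variable R : realType.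

Lemma vnorm_mx1 (v : 'cV[R]_1) : vnorm v = `|v 0 0|.
Proof. by rewrite /vnorm big_ord1 sqrtr_sqr. Qed.

Lemma in_Qbar_scalar1 (n : nat) : in_Qbar (1%:M : 'M[R]_n).
Proof.
split; first exact: trmx1.
split; last by move=> v; rewrite mul1mx.
move=> v; rewrite mulmx1 mxE; apply: sumr_ge0 => i _.
by rewrite mxE -expr2 sqr_ge0.
Qed.

Lemma eigenvalue_mx1 (M : 'M[R]_1) (l : R) : eigenvalue M l <-> l = M 0 0.
Proof.
split=> [/eigenvalueP [v Mv v_neq0] | ->].
  have v00_neq0 : v 0 0 != 0.
    by apply: contra v_neq0 => /eqP v00; apply/eqP/matrixP => i j; rewrite !ord1 mxE.
  have := congr1 (fun A : 'M[R]_1 => A 0 0) Mv; rewrite /= !mxE big_ord1 => Mv00.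
  by apply: (mulfI v00_neq0); rewrite Mv00 mulrC.
apply/eigenvalueP; exists (const_mx 1).
  by apply/matrixP => i j; rewrite !ord1 !mxE big_ord1 mxE mul1r mulr1.
by apply/eqP => /matrixP /(_ 0 0); rewrite !mxE; exact/eqP/oner_neq0.
Qed.

Lemma sigma_min_mx1 (A : 'M[R]_1) : 0 <= A 0 0 -> sigma_min A = A 0 0.
Proof.
move=> A_ge0; rewrite /sigma_min.
have AtA : (A^T *m A) 0 0 = A 0 0 ^+ 2 by rewrite !mxE big_ord1 mxE expr2.
suff -> : [set s : R | exists2 l : R, eigenvalue (A^T *m A) l & s = Num.sqrt l]
          = [set A 0 0] by exact: inf1.
apply/seteqP; split=> s /=.
  by move=> [l /eigenvalue_mx1 -> ->]; rewrite AtA sqrtr_sqr ger0_norm.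
by move=> ->; exists ((A^T *m A) 0 0); [exact/eigenvalue_mx1 | rewrite AtA sqrtr_sqr ger0_norm].
Qed.

Lemma limn_einf_ge (u : nat -> \bar R) (c : \bar R) :
  (forall N, (0 < N)%N -> (c <= u N)%E) -> (c <= limn_einf u)%E.
Proof.
move=> uc; rewrite limn_einf_lim (cvg_lim _ (@cvg_einfs_sup _ _)) //.
apply: le_trans; last by apply: ereal_sup_ubound; exists 1%N.
by apply: le_ereal_inf_tmp => _ [k /= k_ge1 <-]; exact: uc.
Qed.

Lemma synchronize_mx1_diff (p : nat) (x : nat -> 'I_p -> 'cV[R]_1) (i j : 'I_p)
    (e : R) :
  synchronize x -> 0 < e -> \forall k \near \oo, `|x k i 0 0 - x k j 0 0| < e.
Proof.
move=> [xbar xbar_cvg] e_gt0; have e2_gt0 : 0 < e / 2 by rewrite divr_gt0.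
have /cvgrPdist_lt xi := xbar_cvg i; have /cvgrPdist_lt xj := xbar_cvg j.
apply: filterS2 (xi _ e2_gt0) (xj _ e2_gt0) => k.
rewrite !vnorm_mx1 !sub0r !normrN !normr_id !mxE.
by rewrite distrC => /distm_lt_splitr + xj_near; apply; rewrite distrC.
Qed.

Definition swap_mx : 'M[R]_2 := \matrix_(i, j) (i != j)%:R.

Definition swap_ord (i : 'I_2) : 'I_2 := if i == 0 then 1 else 0.

Lemma swap_mx_interconnection : interconnection swap_mx.
Proof.
split; first by move=> i j; rewrite mxE ler0n.
move=> i; rewrite big_ord_recr big_ord1 /= !mxE.
by case: i => [[|[|//]]] ? /=; rewrite ?add0r ?addr0.
Qed.

Lemma swap_mx_connected : connected_graph swap_mx.
Proof.
exists 0 => -[[|[|//]] i_lt2].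
  by rewrite (_ : Ordinal i_lt2 = 0) //; apply/val_inj.
by apply: connect1; rewrite /edge mxE ltr01.
Qed.

Lemma traj_swap_succ (n : nat) (x0 : 'I_2 -> 'cV[R]_n) (k : nat) (i : 'I_2) :
  traj swap_mx (fun=> 1%:M) x0 k.+1 i = traj swap_mx (fun=> 1%:M) x0 k (swap_ord i).
Proof.
rewrite /= mul1mx big_mkcond big_ord_recr big_ord1 /= !mxE /swap_ord.
case: i => [[|[|//]]] i_lt2 /=; rewrite scale1r ?add0r ?addr0 addrC subrK;
  by congr traj; apply/val_inj.
Qed.

Lemma traj_swap_diff (n : nat) (x0 : 'I_2 -> 'cV[R]_n) (k : nat) :
  traj swap_mx (fun=> 1%:M) x0 k 0 - traj swap_mx (fun=> 1%:M) x0 k 1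
  = (-1) ^+ k *: (x0 0 - x0 1).
Proof.
elim: k => [|k IH]; first by rewrite scale1r.
by rewrite !traj_swap_succ exprS -scalerA -IH scaleN1r opprB.
Qed.

End SwapExample.

Theorem theorem15 (R : realType) :
  exists (p n : nat) (L : 'M[R]_p) (Q : nat -> 'M[R]_n),
    (0 < n)%N /\
    interconnection L /\
    connected_graph L /\
    (forall k : nat, in_Qbar (Q k)) /\
    (0%E < limn_einf (fun N : nat =>
          (((N%:R)^-1 * sigma_min (\sum_(0 <= k < N.+1) Q k)) : R)%:E))%E /\
    (exists x0 : 'I_p -> 'cV[R]_n, ~ synchronize (traj L Q x0)).
Proof.
exists 2%N, 1%N, (swap_mx R), (fun=> 1%:M).
split=> //; split; first exact: swap_mx_interconnection.
split; first exact: swap_mx_connected.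
split; first by move=> k; exact: in_Qbar_scalar1.
split.
  apply: (@lt_le_trans _ _ 1%E); first by rewrite lte_fin ltr01.
  apply: limn_einf_ge => N N_gt0.
  have sum_id : (\sum_(0 <= k < N.+1) 1%:M : 'M[R]_1) 0 0 = N.+1%:R.
    by rewrite sumr_const_nat subn0 mulmxnE mxE.
  by rewrite lee_fin sigma_min_mx1 sum_id ?ler0n // ler_pdivlMl ?ltr0n // mulr1 ler_nat.
pose x0 (i : 'I_2) : 'cV[R]_1 := if i == 0 then 1 else -1.
exists x0 => /(@synchronize_mx1_diff R 2 _ 0 1 2) /(_ (ltr0n R 2)) /filter_ex [k].
have := congr1 (fun A : 'cV[R]_1 => A 0 0) (@traj_swap_diff R 1 x0 k).
rewrite !mxE => ->; apply/negP; rewrite -leNgt normrM normrX normrN1 expr1n mul1r.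
by rewrite /x0 /= opprK ger0_norm.
Qed.
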